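(* Let $B$ be a connected building set on $[n]$ and write $F(P_B)=\sum_{\alpha\models n}\zeta_\alpha(B)M_\alpha$. Then $$\sum_{\alpha\models n}(-1)^{k(\alpha)}\zeta_\alpha(B)=(-1)^nf_0(P_B),$$ where $f_0(P_B)$ is the number of vertices of $P_B$. Equivalently, if $\chi(P_B,m)=\sum_{\alpha\models n}\zeta_\alpha(B)\binom{m}{k(\alpha)}$ (a polynomial in $m$), then $\chi(P_B,-1)=(-1)^nf_0(P_B)$.
   Context: A building set on a finite set $V$ is a collection $B$ of nonempty subsets of $V$ such that $\{v\}\in B$ for all $v\in V$ and such that $I,J\in B$, $I\cap J\neq\emptyset$ imply $I\cup J\in B$; it is connected if $V\in B$. The nestohedron of $B$ is $P_B=\sum_{I\in B}\mathrm{Conv}\{e_i: i\in I\}\subset\mathbb{R}^V$. For a convex polytope $Q\subset\mathbb{R}^n$, $f:[n]\to\mathbb{N}=\{1,2,\dots\}$ is $Q$-generic if $x\mapsto\sum_i f(i)x_i$ attains its maximum over $Q$ at a unique point, and $F(Q)=\sum_{f\ Q\text{-generic}}x_{f(1)}\cdots x_{f(n)}$. For a composition $\alpha=(a_1,\dots,a_k)\models n$ of length $k(\alpha)=k$, $M_\alpha=\sum_{i_1<\dots<i_k}x_{i_1}^{a_1}\cdots x_{i_k}^{a_k}$. *)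

From HB Require Import structures.
From mathcomp Require Import all_boot all_order all_algebra.
From Stdlib Require Import ClassicalEpsilon.
Set Implicit Arguments. Unset Strict Implicit. Unset Printing Implicit Defensive.
Import Order.TTheory GRing.Theory Num.Theory.
Local Open Scope ring_scope.

Definition pb (P : Prop) : bool :=
  if excluded_middle_informative P then true else false.

Definition building_set (n : nat) (B : {set {set 'I_n}}) : Prop :=
  (forall v : 'I_n, [set v] \in B) /\
  (forall I, I \in B -> I != set0) /\
  (forall I J, I \in B -> J \in B -> I :&: J != set0 -> I :|: J \in B).

Definition connected_bs (n : nat) (B : {set {set 'I_n}}) : Prop := [set: 'I_n] \in B.

Section Poly.
Variables (R : realFieldType) (n : nat).
Notation pt := {ffun 'I_n -> R}.

Definition lin (c : 'I_n -> R) (x : pt) : R := \sum_(i < n) c i * x i.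

Definition in_conv (T : finType) (A : {set T}) (p : T -> pt) (x : pt) : Prop :=
  exists lam : T -> R, (forall t, t \in A -> 0 <= lam t) /\
    \sum_(t in A) lam t = 1 /\ (forall i, x i = \sum_(t in A) lam t * p t i).

Definition unitv (j : 'I_n) : pt := [ffun k => (k == j)%:R].

Definition simplex (I : {set 'I_n}) (x : pt) : Prop := in_conv I unitv x.

Definition nestohedron (B : {set {set 'I_n}}) (x : pt) : Prop :=
  exists y : {set 'I_n} -> pt, (forall I, I \in B -> simplex I (y I)) /\
    (forall i, x i = \sum_(I in B) y I i).

Definition generic (Q : pt -> Prop) (f : 'I_n -> nat) : Prop :=
  exists x, Q x /\ forall y, Q y -> y <> x ->
    lin (fun i => (f i)%:R) y < lin (fun i => (f i)%:R) x.

Definition is_vertex (Q : pt -> Prop) (x : pt) : Prop :=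
  Q x /\ exists c : 'I_n -> R, forall y, Q y -> y <> x -> lin c y < lin c x.
End Poly.

Definition is_comp (n : nat) (s : seq nat) : bool :=
  all (fun a => 0 < a)%N s && (sumn s == n).

Definition comps (n : nat) : seq (seq nat) :=
  [seq s <- flatten [seq [seq map val (tval t) | t <- enum {: k.-tuple 'I_n.+1}]
                   | k <- iota 0 n.+1] | is_comp n s].

(* coefficient of the monomial x_1^{e_0} ... x_N^{e_{N-1}} in M_alpha *)
Definition Mcoef (N : nat) (e : 'I_N -> nat) (a : seq nat) : int :=
  (([seq x <- map e (enum 'I_N) | x != 0%N] == a) : nat)%:Z.

From HB Require Import structures.
From mathcomp Require Import all_boot all_order all_algebra zify.
From Stdlib Require Import ClassicalEpsilon.
Set Implicit Arguments. Unset Strict Implicit. Unset Printing Implicit Defensive.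
Import Order.TTheory GRing.Theory Num.Theory.
Local Open Scope ring_scope.

(* A weight c is generic for P_B exactly when it has a strict maximum s(I) on every
   block I of B; it is then maximised at the vertex sum_(I in B) e_(s(I)), so the
   vertices correspond to the selections s induced by generic weights.
   Read on monomials in n+1 variables, the expansion of F(P_B) says that zeta_alpha
   counts the generic g : [n] -> {0..n} with fiber sizes alpha; the alternating sum
   thus counts, with sign (-1)^k, the generic g mapping onto an initial segment
   {0..k-1}.  Grouped by their selection s, these are the maps onto {0..k-1} that
   decrease strictly from s(I) to the other elements of I, and for every s their
   signed count is (-1)^n: the elements sent to k-1 form a nonempty set U of
   maximal elements, and in the resulting recursion the sum of (-1)^|U| over these
   U is -1, by the involution toggling one maximal element. *)

Lemma sum_powerset_sign_eq0 (T : finType) (M : {set T}) (m : T) : m \in M ->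
  \sum_(U in powerset M) (-1) ^+ #|U| = 0 :> int.
Proof.
move=> mM; pose toggle (U : {set T}) := if m \in U then U :\ m else m |: U.
have toggleK : involutive toggle.
  by move=> U; rewrite /toggle; case: (boolP (m \in U)) => mU;
    rewrite !inE eqxx /= ?setD1K ?setU1K.
have toggle_sub U : (toggle U \in powerset M) = (U \in powerset M).
  rewrite !inE /toggle; case: (boolP (m \in U)) => mU; last by rewrite subUset sub1set mM.
  apply/idP/idP => [sUM|]; last exact: subset_trans (subD1set _ _).
  by rewrite -(setD1K mU) subUset sub1set mM sUM.
have toggle_sign U : (-1) ^+ #|toggle U| = - (-1) ^+ #|U| :> int.
  rewrite /toggle; case: (boolP (m \in U)) => mU; last by rewrite cardsU1 mU exprS mulN1r.
  by rewrite [in RHS](cardsD1 m U) mU exprS mulN1r opprK.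
set S := \sum_(U in _) _; have : S = - S.
  rewrite {2}/S -sumrN /S (reindex_inj (can_inj toggleK)) /=.
  by apply: eq_big => U; rewrite ?toggle_sub // => _; rewrite toggle_sign.
by move/eqP; rewrite -addr_eq0 -mulr2n mulrn_eq0 => /eqP.
Qed.

Section StrictSurjections.
Variables (T : finType) (K : nat) (r : rel T) (rank : T -> nat).
Hypothesis card_leK : (#|T| <= K)%N.
Hypothesis rank_decr : forall a b, r a b -> (rank b < rank a)%N.

Definition onto_prefix (g : {ffun T -> 'I_K.+1}) (X : {set T}) (k : nat) :=
  [forall i : 'I_K.+1, (i < k)%N == [exists t in X, g t == i]].

(* Values outside X are fixed to 0, so that the cardinality counts maps on X. *)
Definition strict_surj (X : {set T}) (k : nat) := [set g : {ffun T -> 'I_K.+1} |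
  [&& [forall t, (t \notin X) ==> (g t == ord0)], onto_prefix g X k &
      [forall a, forall b, [&& a \in X, b \in X & r a b] ==> (g b < g a)%N]]].

Definition top_elements (X : {set T}) := [set b in X | [forall a in X, ~~ r a b]].

Lemma top_elements_sub X : top_elements X \subset X.
Proof. by apply/subsetP => t; rewrite inE => /andP []. Qed.

Lemma top_elements_neq0 X : X != set0 -> top_elements X != set0.
Proof.
case/set0Pn => x0 Xx0; case: (arg_maxnP rank Xx0) => b Xb rank_max.
apply/set0Pn; exists b; rewrite inE; apply/andP; split=> //; apply/forallP => a; apply/implyP => Xa.
by apply/negP => /rank_decr; have := rank_max a Xa; lia.
Qed.

Lemma card_strict_surj0 X : #|strict_surj X 0| = (X == set0).
Proof.
case: (eqVneq X set0) => [->|/set0Pn [x Xx]] /=.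
  apply/eqP/cards1P; exists [ffun => ord0]; apply/setP => g; rewrite !inE.
  apply/idP/eqP => [/and3P [/forallP g0 _ _]|->].
    by apply/ffunP => t; rewrite ffunE; apply/eqP; have := g0 t; rewrite inE.
  apply/and3P; split.
  - by apply/forallP => t; rewrite ffunE eqxx implybT.
  - apply/forallP => i; rewrite ltn0 eq_sym eqbF_neg.
    by apply/existsPn => t; rewrite inE.
  - by apply/forallP => a; apply/forallP => b; rewrite inE.
apply/eqP; rewrite cards_eq0; apply/eqP/setP => g; rewrite !inE.
apply/negP => /and3P [_ /forallP /(_ (g x))]; rewrite ltn0 eq_sym eqbF_neg.
by case/negP; apply/existsP; exists x; rewrite Xx eqxx.
Qed.

Lemma strict_surj_small (Y : {set T}) : (#|Y| < K)%N -> strict_surj Y K = set0.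
Proof.
move=> cardY; apply/setP => g; rewrite !inE; apply/negP => /and3P [_ /forallP onto _].
pose low := [set widen_ord (leqnSn K) i | i : 'I_K].
have low_sub : low \subset g @: Y.
  apply/subsetP => _ /imsetP [i _ ->]; have := onto (widen_ord (leqnSn K) i).
  by rewrite /= ltn_ord eq_sym => /eqP/existsP [t /andP [Yt /eqP <-]]; apply: imset_f.
have card_low : #|low| = K.
  by rewrite card_imset ?card_ord // => i j /(congr1 val) ij; apply: val_inj.
by have := leq_trans (subset_leq_card low_sub) (leq_imset_card g Y); rewrite card_low; lia.
Qed.

Definition layer (X : {set T}) (k : nat) (g : {ffun T -> 'I_K.+1}) :=
  [set t in X | g t == inord k].

Lemma layer_top X k g : (k < K)%N -> g \in strict_surj X k.+1 ->
  (layer X k g \in powerset (top_elements X)) && (layer X k g != set0).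
Proof.
move=> ltkK; rewrite inE => /and3P [_ /forallP g_onto /forallP g_decr].
have kE : (inord k : 'I_K.+1) = k :> nat by rewrite inordK //; lia.
apply/andP; split.
  rewrite inE; apply/subsetP => t; rewrite !inE => /andP [Xt /eqP gt].
  rewrite Xt /=; apply/forallP => a; apply/implyP => Xa; apply/negP => rat.
  have := g_decr a => /forallP /(_ t); rewrite Xa Xt rat gt /= kE => ltka.
  have := g_onto (g a); case: existsP => [_|[]]; last by exists a; rewrite Xa eqxx.
  by move/eqP; rewrite ltnS leqNgt ltka.
have := g_onto (inord k); rewrite kE ltnSn eq_sym => /eqP/existsP [t /andP [Xt gt]].
by apply/set0Pn; exists t; rewrite inE Xt gt.
Qed.

Section PeelLayer.
Variables (X U : {set T}) (k : nat).
Hypotheses (ltkK : (k < K)%N) (U_top : U \subset top_elements X) (U_neq0 : U != set0).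

Let kE : (inord k : 'I_K.+1) = k :> nat. Proof. by rewrite inordK //; lia. Qed.
Let UX : U \subset X. Proof. exact: subset_trans U_top (top_elements_sub X). Qed.

Definition raise (g : {ffun T -> 'I_K.+1}) : {ffun T -> 'I_K.+1} :=
  [ffun t => if t \in U then inord k else g t].

Definition lower (g : {ffun T -> 'I_K.+1}) : {ffun T -> 'I_K.+1} :=
  [ffun t => if t \in U then ord0 else g t].

Lemma raise_strict_surj g : g \in strict_surj (X :\: U) k ->
  raise g \in strict_surj X k.+1 /\ layer X k (raise g) = U.
Proof.
rewrite inE => /and3P [/forallP g_out /forallP g_onto /forallP g_decr].
have g_lt t : t \in X :\: U -> (g t < k)%N.
  move=> XUt; have := g_onto (g t); rewrite eq_sym.
  by case: existsP => [_ /eqP //|[]]; exists t; rewrite XUt eqxx.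
split; last first.
  apply/setP => t; rewrite !inE ffunE.
  case: (boolP (t \in U)) => Ut; first by rewrite eqxx andbT (subsetP UX).
  apply/negP => /andP [Xt /eqP gt].
  by have := g_lt t; rewrite !inE Ut Xt gt kE ltnn => /(_ isT).
rewrite inE; apply/and3P; split.
- apply/forallP => t; apply/implyP => Xt; rewrite ffunE.
  have Ut : t \notin U by apply: contra Xt; apply: (subsetP UX).
  by rewrite (negbTE Ut); have := g_out t; rewrite !inE (negbTE Xt) andbF.
- apply/forallP => i; apply/eqP; apply/idP/idP.
    rewrite ltnS leq_eqVlt => /orP [/eqP ik|ltik].
      case/set0Pn: U_neq0 => t Ut; apply/existsP; exists t.
      by rewrite ffunE Ut (subsetP UX) //=; apply/eqP/val_inj; rewrite /= kE ik.
    have := g_onto i; rewrite ltik eq_sym => /eqP/existsP [t /andP [XUt /eqP gt]].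
    apply/existsP; exists t; move: XUt; rewrite !inE ffunE => /andP [Ut Xt].
    by rewrite Xt (negbTE Ut) gt eqxx.
  case/existsP => t /andP [Xt]; rewrite ffunE; case: ifP => Ut /eqP <-; first by rewrite kE.
  by apply/ltnW/g_lt; rewrite !inE Ut Xt.
- apply/forallP => a; apply/forallP => b; rewrite !ffunE.
  apply/implyP => /and3P [Xa Xb rab].
  case: (boolP (b \in U)) => Ub.
    by have := subsetP U_top _ Ub; rewrite inE => /andP [_ /forallP /(_ a)]; rewrite Xa rab.
  have XUb : b \in X :\: U by rewrite !inE Ub Xb.
  case: (boolP (a \in U)) => Ua; first by rewrite kE; apply: g_lt.
  by have := g_decr a => /forallP /(_ b); rewrite !inE Ua Xa Ub Xb rab.
Qed.

Lemma lower_strict_surj g : g \in strict_surj X k.+1 -> layer X k g = U ->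
  lower g \in strict_surj (X :\: U) k /\ raise (lower g) = g.
Proof.
rewrite inE => /and3P [/forallP g_out /forallP g_onto /forallP g_decr] g_layer.
split; last first.
  apply/ffunP => t; rewrite !ffunE; case: (boolP (t \in U)) => // Ut.
  by move: Ut; rewrite -g_layer inE => /andP [_ /eqP].
rewrite inE; apply/and3P; split.
- apply/forallP => t; apply/implyP => XUt; rewrite ffunE.
  case: ifP => Ut //; have := g_out t.
  by move: XUt; rewrite !inE Ut /= => ->.
- apply/forallP => i; apply/eqP; apply/idP/idP => [ltik|].
    have := g_onto i; rewrite ltnS (ltnW ltik) eq_sym => /eqP/existsP [t /andP [Xt /eqP gt]].
    apply/existsP; exists t; rewrite ffunE !inE Xt andbT.
    have Ut : t \notin U.
      by rewrite -g_layer inE Xt /= gt; apply/eqP => ik; move: ltik; rewrite ik kE ltnn.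
    by rewrite Ut (negbTE Ut) gt eqxx.
  case/existsP => t /andP []; rewrite !inE ffunE => /andP [Ut Xt].
  rewrite (negbTE Ut) => /eqP gt.
  have := g_onto i; rewrite eq_sym.
  case: existsP => [_|[]]; last by exists t; rewrite Xt gt eqxx.
  move/eqP/esym; rewrite ltnS leq_eqVlt => /orP [/eqP ik|//].
  by move: Ut; rewrite -g_layer inE Xt /= gt; case/negP; apply/eqP/val_inj; rewrite /= ik kE.
- apply/forallP => a; apply/forallP => b; rewrite !inE !ffunE.
  apply/implyP => /and3P [/andP [Ua Xa] /andP [Ub Xb] rab].
  by rewrite (negbTE Ua) (negbTE Ub); have := g_decr a => /forallP /(_ b); rewrite Xa Xb rab.
Qed.

Lemma card_layer_strict_surj :
  #|[set g in strict_surj X k.+1 | layer X k g == U]| = #|strict_surj (X :\: U) k|.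
Proof.
have -> : [set g in strict_surj X k.+1 | layer X k g == U] = raise @: strict_surj (X :\: U) k.
  apply/setP => g; rewrite inE; apply/andP/imsetP => [[Sg /eqP gU]|[g' Sg' ->]].
    by have [Sg' gE] := lower_strict_surj Sg gU; exists (lower g).
  by have [] := raise_strict_surj Sg' => -> ->.
apply: card_in_imset => g1 g2; rewrite !inE => /and3P [/forallP g1_out _ _].
move=> /and3P [/forallP g2_out _ _] /ffunP g12; apply/ffunP => t.
have := g12 t; rewrite !ffunE; case: ifP => // Ut _.
by have := g1_out t; have := g2_out t; rewrite !inE Ut /= => /eqP -> /eqP ->.
Qed.

End PeelLayer.

Lemma card_strict_surjS X k : (k < K)%N ->
  #|strict_surj X k.+1| =
    (\sum_(U in powerset (top_elements X) | U != set0) #|strict_surj (X :\: U) k|)%N.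
Proof.
move=> ltkK; rewrite -sum1_card (partition_big (layer X k) [pred U |
  (U \in powerset (top_elements X)) && (U != set0)]) /=; last by move=> g; apply: layer_top.
apply: eq_bigr => U /andP [U_top U_neq0]; rewrite inE in U_top.
by rewrite sum1dep_card -card_layer_strict_surj.
Qed.

Definition signed_count X : int := \sum_(k < K.+1) (-1) ^+ k *+ #|strict_surj X k|.

Lemma signed_count_rec X : signed_count X =
  (X == set0)%:R - \sum_(U in powerset (top_elements X) | U != set0) signed_count (X :\: U).
Proof.
rewrite {1}/signed_count big_ord_recl /= expr0 card_strict_surj0; congr (_ + _).
have shift (k : 'I_K) : (-1) ^+ (bump 0 k) *+ #|strict_surj X (bump 0 k)| =
    - \sum_(U in powerset (top_elements X) | U != set0)
        (-1) ^+ k *+ #|strict_surj (X :\: U) k| :> int.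
  rewrite /bump /= add1n card_strict_surjS // -sumrMnr -sumrN.
  by apply: eq_bigr => U _; rewrite exprS mulN1r mulNrn.
rewrite (eq_bigr _ (fun k _ => shift k)) sumrN exchange_big /=; congr (- _).
apply: eq_bigr => U /andP [U_top /set0Pn [u Uu]]; rewrite inE in U_top.
have UX := subset_trans U_top (top_elements_sub X).
rewrite /signed_count big_ord_recr /= strict_surj_small ?cards0 ?mulr0n ?addr0 //.
rewrite cardsD (setIidPr UX).
have := max_card X; have := subset_leq_card UX.
have : (0 < #|U|)%N by apply/card_gt0P; exists u.
lia.
Qed.

Lemma signed_countE X : signed_count X = (-1) ^+ #|X|.
Proof.
have [m leXm] := ubnP #|X|; elim: m X leXm => // m IH X leXm.
rewrite signed_count_rec.
have [->|X_neq0] := eqVneq X set0.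
  rewrite big1 ?subr0 ?cards0 // => U /andP [U_top]; case/negP.
  by rewrite inE in U_top; rewrite -subset0 (subset_trans U_top) ?top_elements_sub.
have peel U : (U \in powerset (top_elements X)) && (U != set0) ->
    signed_count (X :\: U) = (-1) ^+ #|X| * (-1) ^+ #|U|.
  move=> /andP [U_top /set0Pn [u Uu]]; rewrite inE in U_top.
  have UX := subset_trans U_top (top_elements_sub X).
  have ltUX : (0 < #|U| <= #|X|)%N.
    by rewrite subset_leq_card // andbT; apply/card_gt0P; exists u.
  rewrite IH cardsD (setIidPr UX); last by move: ltUX leXm; lia.
  by rewrite -signr_odd oddB ?(subset_leq_card UX) // signr_addb !signr_odd.
rewrite sub0r (eq_bigr _ peel) -mulr_sumr.
have [x0 Tx0] := set0Pn _ (top_elements_neq0 X_neq0).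
have := sum_powerset_sign_eq0 Tx0; rewrite (bigD1 set0) ?inE ?sub0set //= cards0 expr0.
by move/eqP; rewrite addrC addr_eq0 => /eqP ->; rewrite mulrN1 opprK.
Qed.

End StrictSurjections.

Section Simplex.
Variables (R : realFieldType) (n : nat).
Local Notation pt := {ffun 'I_n -> R}.
Local Notation e := (unitv R).

Lemma lin_unitv (c : 'I_n -> R) t : lin c (e t) = c t.
Proof.
rewrite /lin (bigD1 t) //= big1 ?addr0; first by rewrite ffunE eqxx mulr1.
by move=> i ne; rewrite ffunE (negbTE ne) mulr0.
Qed.

Lemma lin_comb (T : finType) (A : {set T}) (lam : T -> R) (p : T -> pt) (c : 'I_n -> R) (y : pt) :
  (forall i, y i = \sum_(t in A) lam t * p t i) ->
  lin c y = \sum_(t in A) lam t * lin c (p t).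
Proof.
move=> yE; rewrite /lin; under eq_bigr do rewrite yE mulr_sumr.
rewrite exchange_big /=; apply: eq_bigr => t _; rewrite mulr_sumr.
by apply: eq_bigr => i _; rewrite mulrCA.
Qed.

Lemma simplex_unitv (I : {set 'I_n}) m : m \in I -> simplex I (e m).
Proof.
move=> mI; exists (fun t => (t == m)%:R); split; first by move=> t _; rewrite ler0n.
split=> [|i]; rewrite (bigD1 m) //= eqxx ?mul1r big1 ?addr0 //.
  by move=> t /andP [_ /negbTE ->].
by move=> t /andP [_ /negbTE ->]; rewrite mul0r.
Qed.

Lemma lin_simplex_le (c : 'I_n -> R) I y m :
  simplex I y -> (forall t, t \in I -> c t <= c m) -> lin c y <= c m.
Proof.
case=> lam [lam_ge0 [lam_sum1 yE]] c_le.
rewrite (lin_comb c yE) -[c m]mul1r -lam_sum1 mulr_suml.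
by apply: ler_sum => t tI; rewrite lin_unitv ler_wpM2l ?lam_ge0 ?c_le.
Qed.

Lemma simplex_lin_eq_max (c : 'I_n -> R) I y m :
  simplex I y -> m \in I -> (forall j, j \in I -> j != m -> c j < c m) ->
  lin c y = c m -> y = e m.
Proof.
case=> lam [lam_ge0 [lam_sum1 yE]] mI c_lt ycm.
have c_le j : j \in I -> c j <= c m.
  by move=> jI; case: (eqVneq j m) => [->//|jm]; exact/ltW/c_lt.
have gap0 : \sum_(t in I) lam t * (c m - c t) = 0.
  rewrite (eq_bigr _ (fun t _ => mulrBr _ _ _)) sumrB -mulr_suml lam_sum1 mul1r.
  rewrite -ycm (lin_comb c yE); apply/eqP; rewrite subr_eq0; apply/eqP.
  by apply: eq_bigr => t _; rewrite lin_unitv.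
have lam0 t : t \in I -> t != m -> lam t = 0.
  move=> tI tm; have gap_ge0 u : u \in I -> 0 <= lam u * (c m - c u).
    by move=> uI; rewrite mulr_ge0 ?lam_ge0 // subr_ge0 c_le.
  have /eqP := psumr_eq0P gap_ge0 gap0 tI.
  by rewrite mulf_eq0 subr_eq0 (gt_eqF (c_lt t tI tm)) orbF => /eqP.
have lam_m : lam m = 1.
  by rewrite -lam_sum1 (bigD1 m) //= big1 ?addr0 // => t /andP []; exact: lam0.
apply/ffunP => i; rewrite yE (bigD1 m) //= big1 ?addr0 ?lam_m ?mul1r //.
by move=> t /andP [tI tm]; rewrite lam0 // mul0r.
Qed.

End Simplex.

Section NestohedronVertices.
Variables (R : realFieldType) (n : nat) (B : {set {set 'I_n}}).
Hypothesis B_neq0 : forall I, I \in B -> I != set0.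
Local Notation pt := {ffun 'I_n -> R}.
Local Notation e := (unitv R).
Local Notation P := (@nestohedron R n B).
Local Notation selection := {ffun {set 'I_n} -> option 'I_n}.

Definition strict_argmax (c : 'I_n -> R) (I : {set 'I_n}) (m : 'I_n) :=
  (m \in I) && [forall j in I, (j != m) ==> (c j < c m)].

Definition generic_weight (c : 'I_n -> R) := [forall I in B, [exists m, strict_argmax c I m]].

Definition selector (c : 'I_n -> R) : selection :=
  [ffun I => if I \in B then [pick m | strict_argmax c I m] else None].

Definition selected_point (s : selection) (I : {set 'I_n}) : pt :=
  [ffun k => (s I == Some k)%:R].

Definition selected_vertex (s : selection) : pt :=
  [ffun k => \sum_(I in B) selected_point s I k].

Lemma strict_argmax_mem c I m : strict_argmax c I m -> m \in I.
Proof. by case/andP. Qed.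

Lemma strict_argmax_lt c I m j : strict_argmax c I m -> j \in I -> j != m -> c j < c m.
Proof. by case/andP => _ /forallP /(_ j) /implyP H /H /implyP. Qed.

Lemma strict_argmax_le c I m j : strict_argmax c I m -> j \in I -> c j <= c m.
Proof.
by move=> cm jI; case: (eqVneq j m) => [->//|jm]; apply/ltW/(strict_argmax_lt cm).
Qed.

Lemma strict_argmax_uniq c I m1 m2 :
  strict_argmax c I m1 -> strict_argmax c I m2 -> m1 = m2.
Proof.
move=> cm1 cm2; apply/eqP/negP => /negP m12.
have := strict_argmax_lt cm1 (strict_argmax_mem cm2); rewrite eq_sym => /(_ m12).
by rewrite ltNge (strict_argmax_le cm2 (strict_argmax_mem cm1)).
Qed.

Lemma selector_eq c I m : I \in B -> strict_argmax c I m -> selector c I = Some m.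
Proof.
move=> IB cm; rewrite ffunE IB; case: pickP => [m' cm'|/(_ m)]; last by rewrite cm.
by rewrite (strict_argmax_uniq cm' cm).
Qed.

Lemma selectorP c I m : selector c I = Some m -> I \in B /\ strict_argmax c I m.
Proof.
by rewrite ffunE; case: (boolP (I \in B)) => // IB; case: pickP => // m' cm' [<-].
Qed.

Lemma generic_weight_selector c I : generic_weight c -> I \in B ->
  exists m, strict_argmax c I m /\ selector c I = Some m.
Proof.
move=> /forallP /(_ I) + IB; rewrite IB => /existsP [m cm].
by exists m; rewrite (selector_eq IB cm).
Qed.

Lemma selected_point_eq (s : selection) I m : s I = Some m -> selected_point s I = e m.
Proof. by move=> sI; apply/ffunP => k; rewrite !ffunE sI /= eq_sym. Qed.

Lemma lin_nestohedron (c : 'I_n -> R) (x : pt) (y : {set 'I_n} -> pt) :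
  (forall i, x i = \sum_(I in B) y I i) -> lin c x = \sum_(I in B) lin c (y I).
Proof.
move=> xE; rewrite (@lin_comb _ _ _ B (fun _ => 1) y c x) => [|i].
  by apply: eq_bigr => I _; rewrite mul1r.
by rewrite xE; apply: eq_bigr => I _; rewrite mul1r.
Qed.

Lemma lin_selected_vertex c (s : selection) :
  lin c (selected_vertex s) = \sum_(I in B) lin c (selected_point s I).
Proof. by apply: lin_nestohedron => i; rewrite ffunE. Qed.

Lemma selected_vertex_in c : generic_weight c -> P (selected_vertex (selector c)).
Proof.
move=> gc; exists (selected_point (selector c)); split=> [I IB|i]; last by rewrite ffunE.
have [m [cm sI]] := generic_weight_selector gc IB.
by rewrite (selected_point_eq sI); apply/simplex_unitv/(strict_argmax_mem cm).
Qed.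

Lemma selected_vertex_max c x : generic_weight c -> P x ->
  x != selected_vertex (selector c) -> lin c x < lin c (selected_vertex (selector c)).
Proof.
move=> gc [y [y_simplex xE]] xv.
have block_le I : I \in B -> lin c (y I) <= lin c (selected_point (selector c) I).
  move=> IB; have [m [cm sI]] := generic_weight_selector gc IB.
  rewrite (selected_point_eq sI) lin_unitv; apply: lin_simplex_le (y_simplex I IB) _.
  by move=> t; apply: strict_argmax_le.
rewrite lt_neqAle (lin_nestohedron c xE) lin_selected_vertex ler_sum // andbT.
apply: contra xv => /eqP eq_sum; apply/eqP/ffunP => i; rewrite xE ffunE.
apply: eq_bigr => I IB; have [m [cm sI]] := generic_weight_selector gc IB.
have gap_ge0 J : J \in B -> 0 <= lin c (selected_point (selector c) J) - lin c (y J).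
  by move/block_le; rewrite subr_ge0.
have gap0 : \sum_(J in B) (lin c (selected_point (selector c) J) - lin c (y J)) = 0.
  by rewrite sumrB eq_sum subrr.
have /eqP := psumr_eq0P gap_ge0 gap0 IB.
rewrite subr_eq0 (selected_point_eq sI) lin_unitv => /eqP/esym ycm.
rewrite (simplex_lin_eq_max (y_simplex I IB) (strict_argmax_mem cm) _ ycm) //.
by move=> j; apply: strict_argmax_lt.
Qed.

(* If c has no strict maximum on a block I, exchanging the I-summand of a maximiser
   between two maximisers of c on I produces two distinct maximisers of c on P. *)
Lemma generic_weight_of_max c x : P x ->
  (forall y, P y -> y <> x -> lin c y < lin c x) -> generic_weight c.
Proof.
move=> [y [y_simplex xE]] x_max; apply/forallP => I; apply/implyP => IB.
case: (boolP [exists m, strict_argmax c I m]) => // /existsPn no_max; exfalso.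
have [m mI c_le] : exists2 m, m \in I & forall j, j \in I -> c j <= c m.
  have [i0 Ii0] := set0Pn _ (B_neq0 IB).
  by case: (arg_maxP c Ii0) => m mI m_max; exists m.
have [j [jI jm cmj]] : exists j, [/\ j \in I, j != m & c m <= c j].
  move: (no_max m); rewrite /strict_argmax mI negb_forall => /existsP [j].
  by rewrite negb_imply => /andP [jI]; rewrite negb_imply -leNgt => /andP [jm]; exists j.
pose z k : pt := [ffun i => \sum_(J in B) (if J == I then e k else y J) i].
have z_in k : k \in I -> P (z k).
  move=> kI; exists (fun J => if J == I then e k else y J); split=> [J JB|i]; last by rewrite ffunE.
  by case: eqP => [->|_]; [exact: simplex_unitv | exact: y_simplex].
have z_ge k : c k = c m -> lin c x <= lin c (z k).
  move=> ckm; rewrite (lin_nestohedron c xE) (@lin_nestohedron c (z k)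
    (fun J => if J == I then e k else y J)) => [|i]; last by rewrite ffunE.
  rewrite !(bigD1 I IB) /= eqxx lin_unitv ckm.
  rewrite [X in _ <= _ + X](eq_bigr (fun J => lin c (y J))) => [|J /andP [_ /negbTE ->] //].
  by rewrite lerD2r; apply: lin_simplex_le (y_simplex I IB) c_le.
have zmj : z m != z j.
  have zE k i : z k i = e k i + \sum_(J in B | J != I) y J i.
    by rewrite ffunE (bigD1 I IB) /= eqxx; congr (_ + _); apply: eq_bigr => J /andP [_ /negbTE ->].
  apply/eqP => /ffunP /(_ m); rewrite !zE => /addIr.
  by rewrite !ffunE eqxx eq_sym (negbTE jm) => /eqP; rewrite oner_eq0.
have cjm : c j = c m by apply/eqP; rewrite eq_le cmj c_le.
have [zmx|zmx] := eqVneq (z m) x.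
  have zjx : z j <> x by move=> zjx; rewrite zmx zjx eqxx in zmj.
  by have := x_max _ (z_in j jI) zjx; rewrite ltNge z_ge.
by have := x_max _ (z_in m mI) (elimN eqP zmx); rewrite ltNge z_ge.
Qed.

Lemma generic_weightP (f : 'I_n -> nat) : generic P f <-> generic_weight (fun i => (f i)%:R).
Proof.
split=> [[x [Px x_max]]|gf]; first exact: generic_weight_of_max Px x_max.
exists (selected_vertex (selector (fun i => (f i)%:R))); split; first exact: selected_vertex_in.
by move=> y Py yv; apply: selected_vertex_max => //; apply/eqP.
Qed.

Lemma is_vertexP x :
  is_vertex P x <-> exists c, generic_weight c /\ x = selected_vertex (selector c).
Proof.
split=> [[Px [c x_max]]|[c [gc ->]]]; last first.
  split; first exact: selected_vertex_in.
  by exists c => y Py yv; apply: selected_vertex_max => //; apply/eqP.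
have gc := generic_weight_of_max Px x_max; exists c; split=> //.
apply/eqP/negPn/negP => xv; have := selected_vertex_max gc Px xv.
have vx : selected_vertex (selector c) <> x by move=> vx; rewrite vx eqxx in xv.
by rewrite ltNge (ltW (x_max _ (selected_vertex_in gc) vx)).
Qed.

Lemma selected_vertex_inj c c' : generic_weight c -> generic_weight c' ->
  selected_vertex (selector c) = selected_vertex (selector c') -> selector c = selector c'.
Proof.
move=> gc gc' eq_v; apply/ffunP => I.
have [IB|IB] := boolP (I \in B); last by rewrite !ffunE (negbTE IB).
have [m [cm sI]] := generic_weight_selector gc IB.
have [m' [cm' s'I]] := generic_weight_selector gc' IB.
have gap_ge0 J : J \in B ->
    0 <= lin c' (selected_point (selector c') J) - lin c' (selected_point (selector c) J).
  move=> JB; have [a [ca sJ]] := generic_weight_selector gc JB.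
  have [b [cb s'J]] := generic_weight_selector gc' JB.
  by rewrite (selected_point_eq sJ) (selected_point_eq s'J) !lin_unitv subr_ge0
    (strict_argmax_le cb (strict_argmax_mem ca)).
have gap0 : \sum_(J in B) (lin c' (selected_point (selector c') J) -
    lin c' (selected_point (selector c) J)) = 0.
  by rewrite sumrB -!lin_selected_vertex eq_v subrr.
have /eqP := psumr_eq0P gap_ge0 gap0 IB.
rewrite subr_eq0 (selected_point_eq sI) (selected_point_eq s'I) !lin_unitv sI s'I => /eqP cm'm.
congr Some; apply/eqP/negPn/negP => mm'.
by have := strict_argmax_lt cm' (strict_argmax_mem cm) mm'; rewrite cm'm ltxx.
Qed.

End NestohedronVertices.

Lemma size_le_sumn (s : seq nat) : all (fun x => 0 < x)%N s -> (size s <= sumn s)%N.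
Proof. by elim: s => //= x s IH /andP [x_gt0 /IH]; lia. Qed.

Lemma mem_leq_sumn (s : seq nat) x : x \in s -> (x <= sumn s)%N.
Proof. by elim: s => //= y s IH; rewrite inE => /orP [/eqP ->|/IH]; lia. Qed.

Section Compositions.
Variable n : nat.

Definition comps_of_size (k : nat) : seq (seq nat) :=
  [seq map val (tval t) | t <- enum {: k.-tuple 'I_n.+1}].

Lemma size_comps_of_size k s : s \in comps_of_size k -> size s = k.
Proof. by case/mapP => t _ ->; rewrite size_map size_tuple. Qed.

Lemma comps_uniq : uniq (comps n).
Proof.
suff flat_uniq m k : uniq (flatten [seq comps_of_size i | i <- iota k m]).
  exact: filter_uniq (flat_uniq n.+1 0%N).
elim: m k => //= m IH k; rewrite cat_uniq IH andbT.
rewrite map_inj_uniq ?enum_uniq /=; last first.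
  by move=> t1 t2 /(inj_map val_inj) /val_inj.
apply/hasPn => s /flatten_mapP [k']; rewrite mem_iota => /andP [lt_kk' _] s_k'.
by apply/negP => /size_comps_of_size; rewrite (size_comps_of_size s_k'); lia.
Qed.

Lemma mem_comps s : (s \in comps n) = is_comp n s.
Proof.
rewrite mem_filter; apply/andb_idr => /andP [s_gt0 /eqP sum_s].
apply/flatten_mapP; exists (size s).
  by rewrite mem_iota add0n ltnS -sum_s size_le_sumn.
apply/mapP; exists (map_tuple inord (in_tuple s)); first by rewrite mem_enum.
rewrite /= -map_comp -{1}(map_id s); apply/eq_in_map => x xs /=.
by rewrite inordK //; have := mem_leq_sumn xs; lia.
Qed.

Lemma size_comps s : s \in comps n -> (size s < n.+1)%N.
Proof. by rewrite mem_comps => /andP [/size_le_sumn + /eqP <-]. Qed.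

Lemma Mcoef_nth (a b : seq nat) : a \in comps n ->
  Mcoef (fun j : 'I_n.+1 => nth 0%N a j) b = (a == b)%:Z.
Proof.
move=> a_comp; have /andP [a_gt0 _] : is_comp n a by rewrite -mem_comps.
rewrite /Mcoef; congr ((_ : nat)%:Z); congr (nat_of_bool (_ == _)).
have lt_an := size_comps a_comp.
have -> : [seq nth 0%N a j | j : 'I_n.+1 <- enum 'I_n.+1] = map (nth 0%N a) (iota 0 n.+1).
  by rewrite -val_enum_ord -map_comp.
rewrite -(subnKC (ltnW lt_an)) iotaD map_cat filter_cat -/(mkseq _ _) mkseq_nth.
rewrite (all_filterP _); last by apply/allP => x xa; rewrite -lt0n (allP a_gt0).
rewrite -[RHS]cats0 add0n; congr (_ ++ _).
rewrite (eq_in_filter (a2 := pred0)) ?filter_pred0 // => x /mapP [j].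
by rewrite mem_iota => /andP [le_aj _] ->; rewrite nth_default.
Qed.

Local Notation map_n := {ffun 'I_n -> 'I_n.+1}.

Definition fiber_size (g : map_n) (j : 'I_n.+1) := #|[pred i | g i == j]|.

Definition has_fiber_sizes (g : map_n) (a : seq nat) :=
  [forall j : 'I_n.+1, fiber_size g j == nth 0%N a j].

Lemma fiber_size_gt0 (g : map_n) j : (0 < fiber_size g j)%N = [exists t in setT, g t == j].
Proof.
apply/card_gt0P/existsP => [[t]|[t /andP [_ gt]]]; last by exists t; rewrite inE.
by rewrite inE => gt; exists t; rewrite inE.
Qed.

Lemma onto_prefix_fiber_size (g : map_n) k j :
  onto_prefix g setT k -> (0 < fiber_size g j)%N = (j < k)%N.
Proof. by move/forallP/(_ j)/eqP => ->; rewrite fiber_size_gt0. Qed.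

Lemma onto_prefix_uniq (g : map_n) k1 k2 : onto_prefix g setT k1 -> onto_prefix g setT k2 ->
  (k1 <= n)%N -> (k2 <= n)%N -> k1 = k2.
Proof.
wlog le_k12 : k1 k2 / (k1 <= k2)%N => [W g1 g2 k1n k2n|g1 g2 k1n k2n].
  by case: (leqP k1 k2) => [|/ltnW] le_k; [apply: W | apply/esym/W].
apply/eqP; rewrite eqn_leq le_k12 leqNgt; apply/negP => lt_k12.
have lt_k1n : (k1 < n.+1)%N by lia.
have := onto_prefix_fiber_size (Ordinal lt_k1n) g1.
by rewrite (onto_prefix_fiber_size _ g2) /= lt_k12 ltnn.
Qed.

Lemma has_fiber_sizes_onto (g : map_n) a : a \in comps n -> has_fiber_sizes g a ->
  onto_prefix g setT (size a).
Proof.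
rewrite mem_comps => /andP [a_gt0 _] /forallP ga; apply/forallP => i; apply/eqP.
rewrite -fiber_size_gt0 (eqP (ga i)); case: (ltnP i (size a)) => [lt_ia|le_ai].
  by rewrite (allP a_gt0) // mem_nth.
by rewrite nth_default.
Qed.

Lemma sum_fiber_size (g : map_n) : (\sum_(j < n.+1) fiber_size g j)%N = n.
Proof.
rewrite -[RHS](card_ord n) -sum1_card (partition_big g predT) //=.
by apply: eq_bigr => j _; rewrite sum1dep_card; apply: eq_card => i; rewrite !inE.
Qed.

Lemma onto_prefix_fiber_sizes (g : map_n) k : onto_prefix g setT k -> (k <= n)%N ->
  let a := mkseq (fun j => fiber_size g (inord j)) k in
  [/\ a \in comps n, has_fiber_sizes g a & size a = k].
Proof.
move=> g_onto le_kn a; have size_a : size a = k by rewrite size_mkseq.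
have ga : has_fiber_sizes g a.
  apply/forallP => j; rewrite /a; case: (ltnP j k) => [lt_jk|le_kj].
    by rewrite nth_mkseq // inord_val.
  by rewrite nth_default ?size_mkseq // eqn0Ngt (onto_prefix_fiber_size _ g_onto) -leqNgt.
split=> //; rewrite mem_comps; apply/andP; split.
  apply/allP => x /mapP [j]; rewrite mem_iota add0n => /andP [_ lt_jk] ->.
  by rewrite (onto_prefix_fiber_size _ g_onto) inordK //; lia.
rewrite -[X in _ == X](sum_fiber_size g) /a.
have -> : (\sum_(j < n.+1) fiber_size g j = \sum_(0 <= j < n.+1) fiber_size g (inord j))%N.
  by rewrite big_mkord; apply: eq_bigr => j _; rewrite inord_val.
rewrite sumnE big_map (big_cat_nat _ (n := k)) //=; last lia.
rewrite [X in (_ + X)%N]big1_seq ?addn0 /index_iota ?subn0 // => j /andP [_].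
rewrite mem_index_iota => /andP [le_kj lt_jn].
by apply/eqP; rewrite eqn0Ngt (onto_prefix_fiber_size _ g_onto) inordK //; lia.
Qed.

(* Only the fiber-size sequence of g can match, and it is a composition exactly
   when the image of g is an initial segment. *)
Lemma sum_comps_fiber_sizes (g : map_n) :
  \sum_(a <- comps n | has_fiber_sizes g a) (-1) ^+ size a =
  \sum_(k < n.+1 | onto_prefix g setT k) (-1) ^+ k :> int.
Proof.
case: (pickP (fun k : 'I_n.+1 => onto_prefix g setT k)) => [k gk|no_k]; last first.
  rewrite [RHS]big_pred0 // [LHS]big1_seq // => a /andP [ga a_comp].
  by have := no_k (Ordinal (size_comps a_comp)); rewrite /= has_fiber_sizes_onto.
have le_kn : (k <= n)%N by rewrite -ltnS.
rewrite (bigD1 k) //= [X in _ = _ + X]big1 ?addr0 => [|k' /andP [gk' k'k]]; last first.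
  by case/negP: k'k; apply/eqP/val_inj/(onto_prefix_uniq gk' gk) => //; rewrite -ltnS.
have [a_comp ga size_a] := onto_prefix_fiber_sizes gk le_kn.
rewrite big_mkcond (bigD1_seq _ a_comp comps_uniq) /= ga size_a big1_seq ?addr0 //.
move=> b /andP [ba b_comp]; case: ifP => // gb; case/negP: ba; apply/eqP.
have size_b : size b = k.
  by apply: onto_prefix_uniq (has_fiber_sizes_onto b_comp gb) gk _ le_kn; rewrite -ltnS size_comps.
apply: (@eq_from_nth _ 0%N) => [|i]; first by rewrite size_b size_a.
rewrite size_b => lt_ik; have lt_in : (i < n.+1)%N by lia.
move/forallP: gb => /(_ (inord i)) /eqP; move/forallP: ga => /(_ (inord i)) /eqP.
by rewrite inordK // => <- <-.
Qed.

End Compositions.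

Lemma pbP (P : Prop) : pb P <-> P.
Proof. by rewrite /pb; case: excluded_middle_informative. Qed.

Lemma card_lt_set_lt d (T' : porderType d) (T : finType) (c : T -> T') a b :
  (c b < c a)%O -> (#|[set u | (c u < c b)%O]| < #|[set u | (c u < c a)%O]|)%N.
Proof.
move=> cba; apply: proper_card; rewrite properE; apply/andP; split.
  by apply/subsetP => u; rewrite !inE => /lt_trans; apply.
by apply/subsetP => /(_ b); rewrite !inE cba ltxx => /(_ isT).
Qed.

Section VertexCount.
Variables (R : realFieldType) (n : nat) (B : {set {set 'I_n}}).
Hypothesis B_neq0 : forall I, I \in B -> I != set0.
Local Notation selection := {ffun {set 'I_n} -> option 'I_n}.
Local Notation map_n := {ffun 'I_n -> 'I_n.+1}.

Definition weight_of (g : map_n) : 'I_n -> R := fun i => (g i).+1%:R.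
Local Notation generic_map g := (generic_weight B (weight_of g)).

Definition selector_rel (s : selection) : rel 'I_n :=
  fun a b => [exists I in B, [&& s I == Some a, b \in I & b != a]].

Definition selectors : {set selection} :=
  [set s | pb (exists c : 'I_n -> R, generic_weight B c /\ selector B c = s)].

Lemma selectorsP s :
  s \in selectors <-> exists c : 'I_n -> R, generic_weight B c /\ selector B c = s.
Proof. by rewrite inE; apply: pbP. Qed.

Lemma uniq_selected_vertices : uniq [seq selected_vertex R B s | s <- enum selectors].
Proof.
rewrite map_inj_in_uniq ?enum_uniq // => s1 s2.
rewrite !mem_enum => /selectorsP [c1 [gc1 <-]] /selectorsP [c2 [gc2 <-]].
exact: selected_vertex_inj.
Qed.

Lemma mem_selected_vertices x :
  x \in [seq selected_vertex R B s | s <- enum selectors] <-> is_vertex (nestohedron B) x.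
Proof.
rewrite is_vertexP //; split=> [/mapP [s]|[c [gc ->]]].
  by rewrite mem_enum => /selectorsP [c [gc <-]] ->; exists c.
by apply/mapP; exists (selector B c); rewrite // mem_enum; apply/selectorsP; exists c.
Qed.

Lemma selector_rel_lt (c : 'I_n -> R) a b : selector_rel (selector B c) a b -> c b < c a.
Proof.
case/existsP => I /andP [_ /and3P [/eqP /selectorP [_ cm] bI ba]].
exact: strict_argmax_lt cm bI ba.
Qed.

Lemma same_selectorE (c : 'I_n -> R) (g : map_n) : generic_weight B c ->
  generic_map g && (selector B (weight_of g) == selector B c) =
  [forall a, forall b, [&& a \in setT, b \in setT & selector_rel (selector B c) a b] ==>
    (g b < g a)%N].
Proof.
move=> gc; apply/idP/forallP => [/andP [_ /eqP <-] a|g_decr].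
  by apply/forallP => b; apply/implyP => /and3P [_ _ /selector_rel_lt]; rewrite ltr_nat ltnS.
have g_argmax I : I \in B -> exists m,
    [/\ strict_argmax (weight_of g) I m, strict_argmax c I m & selector B c I = Some m].
  move=> IB; have [m [cm sI]] := generic_weight_selector gc IB; exists m; split=> //.
  rewrite /strict_argmax (strict_argmax_mem cm); apply/forallP => j.
  apply/implyP => jI; apply/implyP => jm; have := g_decr m => /forallP /(_ j).
  have -> : selector_rel (selector B c) m j by apply/existsP; exists I; rewrite IB sI eqxx jI jm.
  by rewrite !inE ltr_nat ltnS.
have gg : generic_map g.
  apply/forallP => I; apply/implyP => IB; have [m [gm _ _]] := g_argmax I IB.
  by apply/existsP; exists m.
rewrite gg; apply/eqP/ffunP => I.
have [IB|IB] := boolP (I \in B); last by rewrite !ffunE (negbTE IB).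
by have [m [gm _ ->]] := g_argmax I IB; rewrite (selector_eq IB gm).
Qed.

Lemma card_generic_onto_prefix k :
  #|[set g : map_n | generic_map g && onto_prefix g setT k]| =
  (\sum_(s in selectors) #|strict_surj n (selector_rel s) setT k|)%N.
Proof.
rewrite -sum1_card (partition_big (fun g => selector B (weight_of g)) (mem selectors)) /=.
  apply: eq_bigr => s /selectorsP [c [gc <-]]; rewrite sum1dep_card; apply: eq_card => g.
  rewrite !inE -andbA [onto_prefix _ _ _ && _]andbC andbA same_selectorE // andbC.
  by rewrite [X in _ = X && _](_ : _ = true) //; apply/forallP => t; rewrite inE.
by move=> g; rewrite inE => /andP [gg _]; apply/selectorsP; exists (weight_of g).
Qed.

Lemma signed_count_selector s : s \in selectors ->
  signed_count n (selector_rel s) setT = (-1) ^+ n.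
Proof.
case/selectorsP => c [_ <-].
rewrite (@signed_countE _ n _ (fun t => #|[set u | c u < c t]|)) ?cardsT ?card_ord //.
by move=> a b /selector_rel_lt; apply: card_lt_set_lt.
Qed.

Lemma alternating_generic_sum :
  \sum_(g : map_n | generic_map g) \sum_(k < n.+1 | onto_prefix g setT k) (-1) ^+ k =
  (-1) ^+ n *+ #|selectors| :> int.
Proof.
under eq_bigr do rewrite big_mkcond; rewrite exchange_big /=.
transitivity (\sum_(k < n.+1) \sum_(s in selectors)
    (-1) ^+ k *+ #|strict_surj n (selector_rel s) setT k| : int).
  apply: eq_bigr => k _; rewrite -big_mkcondr sumrMnr -card_generic_onto_prefix -sumr_const.
  by apply: eq_bigl => g; rewrite inE.
rewrite exchange_big -sumr_const; apply: eq_bigr => s /signed_count_selector <-.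
by apply: eq_bigr.
Qed.

Section ZetaCoefficients.
Variable zeta : seq nat -> int.
Hypothesis F_expansion : forall e : 'I_n.+1 -> nat,
  (#|[pred g : map_n | pb (generic (@nestohedron R n B) (fun i => (g i).+1) /\
                          forall j : 'I_n.+1, #|[pred i | g i == j]| = e j)]|)%:Z
  = \sum_(a <- comps n) zeta a * Mcoef e a.

Lemma zeta_card a : a \in comps n ->
  zeta a = #|[set g : map_n | generic_map g && has_fiber_sizes g a]|%:Z.
Proof.
move=> a_comp; have := F_expansion (fun j => nth 0%N a j).
rewrite (eq_bigr (fun b => zeta b * (a == b)%:Z)) => [|b _]; last by rewrite Mcoef_nth.
rewrite (bigD1_seq a a_comp (comps_uniq n)) /= eqxx mulr1 big1 ?addr0 => [<-|b]; last first.
  by rewrite eq_sym => /negbTE ->; rewrite mulr0.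
congr Posz; apply: eq_card => g; rewrite !inE; apply/idP/andP.
  case/pbP => /(generic_weightP R B_neq0) gg g_fib; split=> //.
  by apply/forallP => j; apply/eqP; exact: g_fib.
case=> gg /forallP g_fib; apply/pbP; split; first exact/(generic_weightP R B_neq0).
by move=> j; apply/eqP/g_fib.
Qed.

Lemma alternating_zeta_sum :
  \sum_(a <- comps n) (-1) ^+ size a * zeta a =
  \sum_(g : map_n | generic_map g) \sum_(k < n.+1 | onto_prefix g setT k) (-1) ^+ k.
Proof.
rewrite (eq_big_seq (fun a => \sum_(g | generic_map g)
    if has_fiber_sizes g a then (-1) ^+ size a else 0)) => [|a a_comp].
  by rewrite exchange_big; apply: eq_bigr => g _; rewrite -big_mkcond sum_comps_fiber_sizes.
rewrite zeta_card // -natz mulr_natr -sumr_const -big_mkcondr /=.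
by apply: eq_bigl => g; rewrite inE.
Qed.

End ZetaCoefficients.
End VertexCount.


Theorem mainTheorem8 (R : realFieldType) (n : nat) (B : {set {set 'I_n}})
    (zeta : seq nat -> int) :
  building_set B -> connected_bs B ->
  (forall (N : nat) (e : 'I_N -> nat),
     (#|[pred g : {ffun 'I_n -> 'I_N} |
          pb (generic (@nestohedron R n B) (fun i => (g i).+1) /\
              forall j : 'I_N, #|[pred i | g i == j]| = e j)]|)%:Z
     = \sum_(a <- comps n) zeta a * Mcoef e a) ->
  exists vs : seq {ffun 'I_n -> R},
    uniq vs /\ (forall x, x \in vs <-> is_vertex (@nestohedron R n B) x) /\
    \sum_(a <- comps n) (-1) ^+ size a * zeta a = (-1) ^+ n * (size vs)%:Z.
Proof.
move=> [_ [B_neq0 _]] _ F_expansion.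
exists [seq selected_vertex R B s | s <- enum (selectors R B)].
split; first exact: uniq_selected_vertices.
split; first exact: mem_selected_vertices.
rewrite size_map -cardE (alternating_zeta_sum B_neq0 (F_expansion n.+1)).
by rewrite alternating_generic_sum -natz mulr_natr.
Qed.
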